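(* Let $a,b,d\in\mathbb C$ with $a\notin\mathbb Z$ and $d\notin\{0,-1,-2,\dots\}$. Then, as an identity of formal power series in $x,y$, $$F(a,b;d;x)\,{}_0F_1(1-a;y)=\mathrm H_3(a,b;d;x,-y)+\sum_{k=1}^\infty\sum_{l=1}^k\frac{(-1)^{k-l}(k-1)!}{(l-1)!\,l!\,(k-l)!}\,\frac{(b)_l}{(1-a)_k(1-a)_{k-l}(d)_l}\,x^ly^k\,\mathrm H_3(a-k+l,b+l;d+l;x,-y).$$
   Context: Pochhammer symbol: $(\lambda)_k=\Gamma(\lambda+k)/\Gamma(\lambda)$ for every integer $k$ (possibly negative) whenever defined; $(\lambda)_0=1$. $F(a,b;c;x)=\sum_{k\ge0}\frac{(a)_k(b)_k}{(c)_k k!}x^k$, ${}_0F_1(c;x)=\sum_{k\ge0}\frac{x^k}{(c)_k k!}$. Confluent Horn function $\mathrm H_3(a,b;d;x,y)=\sum_{p,q\ge0}\frac{(a)_{p-q}(b)_p}{(d)_p\,p!\,q!}x^py^q$. All functions are regarded as formal power series in $x,y$; the infinite double sum converges in the formal (degree) topology. *)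

From HB Require Import structures.
From mathcomp Require Import all_boot all_order all_algebra.
Set Implicit Arguments. Unset Strict Implicit. Unset Printing Implicit Defensive.
Import Order.TTheory GRing.Theory Num.Theory.
Local Open Scope ring_scope.

(* Pochhammer symbol with integer index:
   (x)_n = x (x+1) ... (x+n-1) for n >= 0,
   (x)_{-(n+1)} = Gamma(x-n-1)/Gamma(x) = 1 / ((x-1)(x-2)...(x-n-1)). *)
Definition poch (R : fieldType) (x : R) (k : int) : R :=
  match k with
  | Posz n => \prod_(i < n) (x + i%:R)
  | Negz n => (\prod_(i < n.+1) (x - (i.+1)%:R))^-1
  end.

(* Formal power series in two variables x, y, given by their coefficients:
   f m n is the coefficient of x^m y^n. *)
Definition fps (R : fieldType) := nat -> nat -> R.

Definition fps_add (R : fieldType) (f g : fps R) : fps R :=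
  fun m n => f m n + g m n.

Definition fps_scale (R : fieldType) (c : R) (f : fps R) : fps R :=
  fun m n => c * f m n.

Definition fps_mul (R : fieldType) (f g : fps R) : fps R :=
  fun m n => \sum_(i < m.+1) \sum_(j < n.+1) f i j * g (m - i)%N (n - j)%N.

Definition fps_negy (R : fieldType) (f : fps R) : fps R :=
  fun m n => (-1) ^+ n * f m n.

Definition fps_shift (R : fieldType) (l k : nat) (f : fps R) : fps R :=
  fun m n => if (l <= m)%N && (k <= n)%N then f (m - l)%N (n - k)%N else 0.

(* The formal (degree-topology) sum  \sum_{k>=1} \sum_{l=1}^{k} x^l y^k G k l.
   The term (k,l) only contributes to coefficients of x^m y^n with k <= n,
   so the coefficient of x^m y^n is the finite sum over 1 <= k <= n. *)
Definition fps_sum_xy (R : fieldType) (G : nat -> nat -> fps R) : fps R :=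
  fun m n => \sum_(1 <= k < n.+1) \sum_(1 <= l < k.+1) fps_shift l k (G k l) m n.

Definition hyp2F1 (R : fieldType) (a b c : R) : fps R :=
  fun m n => if n == 0%N then
      poch a m * poch b m / (poch c m * (m`!)%:R) else 0.

Definition hyp0F1 (R : fieldType) (c : R) : fps R :=
  fun m n => if m == 0%N then 1 / (poch c n * (n`!)%:R) else 0.

Definition hornH3 (R : fieldType) (a b d : R) : fps R :=
  fun p q => poch a (p%:Z - q%:Z) * poch b p / (poch d p * (p`!)%:R * (q`!)%:R).

Definition coefKL (R : fieldType) (a b d : R) (k l : nat) : R :=
  (-1) ^+ (k - l) * ((k.-1)`!)%:R / (((l.-1)`!)%:R * (l`!)%:R * ((k - l)`!)%:R)
  * (poch b l / (poch (1 - a) k * poch (1 - a) (k - l)%N * poch d l)).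

From HB Require Import structures.
From mathcomp Require Import all_boot all_order all_algebra.
From mathcomp Require Import ring zify.
From Stdlib Require Import FunctionalExtensionality.
Import Order.TTheory GRing.Theory Num.Theory.
Local Open Scope ring_scope.

(* Compare the coefficients of x^m y^n.  The left side gives
   (a)_m (b)_m / ((d)_m m! (1-a)_n n!).  In the term (k,l) of the double sum the
   reflection (a-j)_(z+j) = (-1)^j (1-a)_j (a)_z with j = k-l pulls out (a)_(m-n), and
   the only dependence on l left is C(k-1,l-1) C(m,l), which sums to C(m+k-1,k) = (m)_k/k!
   by Vandermonde.  The remaining sum over k, with H3 itself as the term k = 0, is the
   Chu-Vandermonde sum  sum_k (-1)^(n-k) C(n,k) (m)_k (1-a+k)_(n-k) = (a+m-n)_n, and
   (a)_(m-n) (a+m-n)_n = (a)_m. *)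

Lemma bin_fact_rising m k : ('C((m + k).-1, k) * k`!)%N = \prod_(i < k) (m + i)%N.
Proof.
elim: k => [|k IH]; first by rewrite big_ord0 bin0.
rewrite big_ord_recr /= -IH factS addnS /= mulnCA mulnA -mul_bin_diag.
by rewrite [RHS]mulnC mulnA.
Qed.

Lemma Vandermonde_pred m k : (0 < k)%N ->
  (\sum_(1 <= l < k.+1) 'C(k.-1, l.-1) * 'C(m, l))%N = 'C((m + k).-1, k).
Proof.
case: k => [//|k] _; rewrite addnS /= -binomial.Vandermonde big_ord_recl.
rewrite (bin_small (n := k)) // muln0 add0n.
rewrite big_add1 /= big_mkord; apply: eq_bigr => i _.
have le_ik : (i <= k)%N by rewrite -ltnS.
by rewrite /bump /= add1n subSS bin_sub // mulnC.
Qed.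

Lemma natr_fact_neq0 {R : numDomainType} n : n`!%:R != 0 :> R.
Proof. by rewrite pnatr_eq0 -lt0n fact_gt0. Qed.

Lemma natr_bin {R : numFieldType} [n k : nat] : (k <= n)%N ->
  'C(n, k)%:R = n`!%:R / (k`!%:R * (n - k)`!%:R) :> R.
Proof.
by move=> le_kn; rewrite -(bin_fact le_kn) !natrM mulfK // mulf_neq0 ?natr_fact_neq0.
Qed.

Lemma fps_mul_separated (R : fieldType) (f g : fps R) m n :
  (forall i j, j != 0%N -> f i j = 0) -> (forall i j, i != 0%N -> g i j = 0) ->
  fps_mul f g m n = f m 0%N * g 0%N n.
Proof.
move=> f_x g_y; rewrite /fps_mul big_ord_recr /= big1 ?add0r => [|i _]; last first.
  by apply: big1 => j _; rewrite g_y ?mulr0 // subn_eq0 -ltnNge.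
rewrite subnn big_ord_recl big1 ?addr0 ?subn0 // => j _.
by rewrite f_x ?mul0r.
Qed.

Arguments poch : simpl never.

Section Pochhammer.
Variable R : fieldType.
Implicit Types (x y : R) (z : int).

Lemma pochE x (n : nat) : poch x n = \prod_(i < n) (x + i%:R).
Proof. by []. Qed.

Lemma pochNE x (n : nat) : poch x (Negz n) = (\prod_(i < n.+1) (x - i.+1%:R))^-1.
Proof. by []. Qed.

Lemma poch0 x : poch x 0%N = 1.
Proof. by rewrite pochE big_ord0. Qed.

Lemma pochNS x (n : nat) : poch x (Negz n + 1) = (\prod_(i < n) (x - i.+1%:R))^-1.
Proof.
case: n => [|n]; first by rewrite -[Negz 0 + 1]/(Posz 0) poch0 big_ord0 invr1.
by have -> : Negz n.+1 + 1 = Negz n by rewrite !NegzE; lia.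
Qed.

Lemma pochS x (n : nat) : poch x n.+1 = poch x n * (x + n%:R).
Proof. by rewrite !pochE big_ord_recr. Qed.

Lemma pochSl x (n : nat) : poch x n.+1 = x * poch (x + 1) n.
Proof.
rewrite !pochE big_ord_recl addr0; congr (_ * _); apply: eq_bigr => i _.
by rewrite /bump /= -nat1r addrA.
Qed.

Lemma poch_addn x (m n : nat) : poch x (m + n)%N = poch x m * poch (x + m%:R) n.
Proof.
elim: n => [|n IH]; first by rewrite addn0 poch0 mulr1.
by rewrite addnS !pochS IH natrD addrA mulrA.
Qed.

Lemma poch_neq0 x (n : nat) : (forall i : nat, x + i%:R != 0) -> poch x n != 0.
Proof. by move=> x_neq0; apply/prodf_neq0 => i _; apply: x_neq0. Qed.

Lemma poch_reflect x (n : nat) : poch (1 - x - n%:R) n = (-1) ^+ n * poch x n.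
Proof.
rewrite !pochE (reindex_inj rev_ord_inj) /=.
rewrite (eq_bigr (fun i : 'I_n => - (x + i%:R))) ?prodrN ?card_ord // => i _.
rewrite natrB // -nat1r; ring.
Qed.

Lemma pochDn x y (n : nat) :
  poch (x + y) n = \sum_(k < n.+1) 'C(n, k)%:R * poch x k * poch y (n - k)%N.
Proof.
elim: n x y => [|n IH] x y; first by rewrite big_ord1 !poch0 !mulr1.
have Ex : x * \sum_(k < n.+1) 'C(n, k)%:R * poch (x + 1) k * poch y (n - k)%N
    = \sum_(k < n.+1) 'C(n, k)%:R * poch x k.+1 * poch y (n - k)%N.
  by rewrite big_distrr /=; apply: eq_bigr => k _; rewrite pochSl; ring.
have Ey : y * \sum_(k < n.+1) 'C(n, k)%:R * poch x k * poch (y + 1) (n - k)%N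
    = poch y n.+1 + \sum_(k < n) 'C(n, k.+1)%:R * poch x k.+1 * poch y (n - k)%N.
  rewrite big_distrr /= big_ord_recl /= bin0 mulr1n poch0 subn0 pochSl !mul1r.
  congr (_ + _); apply: eq_bigr => k _.
  by rewrite /bump /= add1n -[(n - k)%N]subnSK // [poch y _]pochSl; ring.
rewrite pochSl mulrDl {1}(addrAC x y 1) -[x + y + 1]addrA !IH Ex Ey.
rewrite [RHS]big_ord_recl /= bin0 mulr1n poch0 subn0 !mul1r addrCA; congr (_ + _).
under [RHS]eq_bigr => i _ do rewrite /bump /= add1n subSS binS natrD !mulrDl.
rewrite big_split /= addrC; congr (_ + _).
by rewrite [RHS]big_ord_recr /= bin_small // mulr0n !mul0r addr0.
Qed.

Lemma chu_vandermonde x y (n : nat) :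
  \sum_(k < n.+1) (-1) ^+ (n - k) * 'C(n, k)%:R * poch y k * poch (x + k%:R) (n - k)%N
  = poch (y - x - n%:R + 1) n.
Proof.
rewrite (_ : y - x - n%:R + 1 = y + (1 - x - n%:R)); last by ring.
rewrite pochDn; apply: eq_bigr => k _; have k_le_n : (k <= n)%N by rewrite -ltnS.
have -> : 1 - x - n%:R = 1 - (x + k%:R) - (n - k)%N%:R by rewrite natrB //; ring.
rewrite poch_reflect; ring.
Qed.

Lemma poch_succ x z : x + z%:~R != 0 -> poch x (z + 1) = poch x z * (x + z%:~R).
Proof.
case: z => n; first by rewrite -[Posz n + 1]/(Posz (n + 1)) addn1 pochS.
have -> : (Negz n)%:~R = - n.+1%:R :> R by rewrite NegzE mulrNz.
rewrite pochNE big_ord_recr /= invfM -mulrA => /mulVf ->.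
by rewrite mulr1 pochNS.
Qed.

Lemma pochD x z (j : nat) : (forall w : int, x + w%:~R != 0) ->
  poch x (z + j%:Z) = poch x z * poch (x + z%:~R) j.
Proof.
move=> x_nonint; elim: j => [|j IH]; first by rewrite addr0 poch0 mulr1.
by rewrite pochS -addn1 PoszD addrA poch_succ // IH intrD addrA mulrA.
Qed.

Lemma poch_succl x z : x != 0 -> poch x (z + 1) = x * poch (x + 1) z.
Proof.
case: z => n x_neq0; first by rewrite -[Posz n + 1]/(Posz (n + 1)) addn1 pochSl.
rewrite !pochNE big_ord_recl /= addrK invfM mulrA mulfV // mul1r.
under eq_bigr => i _ do rewrite /bump /= add1n -[i.+2%:R]natr1 opprD addrACA subrr addr0.
by rewrite pochNS.
Qed.

Lemma poch_subn x z (j : nat) : (forall w : int, x + w%:~R != 0) ->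
  poch (x - j%:R) (z + j%:Z) = (-1) ^+ j * poch (1 - x) j * poch x z.
Proof.
move=> x_nonint; elim: j => [|j IH]; first by rewrite subr0 addr0 poch0 expr0 !mul1r.
have xj_neq0 : x - j.+1%:R != 0 by have := x_nonint (- j.+1%:Z); rewrite mulrNz.
have -> : z + j.+1%:Z = z + j%:Z + 1 by lia.
rewrite poch_succl //; have -> : x - j.+1%:R + 1 = x - j%:R by rewrite -natr1; ring.
by rewrite IH pochS exprS -natr1; ring.
Qed.

Lemma poch_natr (m k : nat) : poch (m%:R : R) k = ('C((m + k).-1, k) * k`!)%:R.
Proof. by rewrite bin_fact_rising natr_prod pochE; apply: eq_bigr => i _; rewrite natrD. Qed.

End Pochhammer.

Section Coefficients.
Variable R : numFieldType.
Variables a b d : R.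
Hypothesis a_nonint : forall z : int, a != z%:~R.
Hypothesis d_nonpos : forall n : nat, d != - n%:R.

Let a_shift_neq0 (z : int) : a + z%:~R != 0.
Proof. by rewrite addr_eq0 -intrN. Qed.

Let d_shift_neq0 (i : nat) : d + i%:R != 0.
Proof. by rewrite addr_eq0. Qed.

Let one_sub_a_shift_neq0 (i : nat) : 1 - a + i%:R != 0.
Proof. by rewrite addrAC subr_eq0 eq_sym nat1r; apply: a_nonint i.+1. Qed.

Let product_coef (m n : nat) : R :=
  poch a m * poch b m / (poch d m * m`!%:R * poch (1 - a) n * n`!%:R).

Let horn_row (k l : nat) : fps R :=
  fps_scale (coefKL a b d k l) (fps_negy (hornH3 (a - k%:R + l%:R) (b + l%:R) (d + l%:R))).

(* The coefficient of x^m y^n in the k-th row (summed over l) of the right side;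
   row 0 is the leading H3 term. *)
Let row_coef (m n k : nat) : R :=
  poch a (m%:Z - n%:Z) * poch b m / poch d m * (-1) ^+ (n - k)
  * 'C((m + k).-1, k)%:R / (m`!%:R * (n - k)`!%:R * poch (1 - a) k).

Lemma coef_hyp2F1_hyp0F1 m n : fps_mul (hyp2F1 a b d) (hyp0F1 (1 - a)) m n = product_coef m n.
Proof.
rewrite fps_mul_separated => [|i j j_neq0|i j i_neq0]; last by rewrite /hyp0F1 (negbTE i_neq0).
  by rewrite /hyp2F1 /hyp0F1 /product_coef /= div1r -mulrA -invfM !mulrA.
by rewrite /hyp2F1 (negbTE j_neq0).
Qed.

Lemma coef_horn_row m n k l : (1 <= l)%N -> (l <= k)%N -> (k <= n)%N ->
  fps_shift l k (horn_row k l) m n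
  = poch a (m%:Z - n%:Z) * poch b m / poch d m * (-1) ^+ (n - k)
    * ('C(k.-1, l.-1) * 'C(m, l))%:R / (m`!%:R * (n - k)`!%:R * poch (1 - a) k).
Proof.
move=> le1l le_lk le_kn; rewrite /fps_shift le_kn andbT.
have [le_lm | lt_ml] := leqP l m; last by rewrite (bin_small lt_ml) muln0 mulr0n mulr0 mul0r.
rewrite /horn_row /fps_scale /fps_negy /hornH3 /coefKL.
have -> : a - k%:R + l%:R = a - (k - l)%N%:R by rewrite natrB //; ring.
have -> : (m - l)%N%:Z - (n - k)%N%:Z = m%:Z - n%:Z + (k - l)%N%:Z by lia.
have split_b : poch b m = poch b l * poch (b + l%:R) (m - l)%N by rewrite -poch_addn subnKC.
have split_d : poch d m = poch d l * poch (d + l%:R) (m - l)%N by rewrite -poch_addn subnKC.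
have sign_sq : (-1) ^+ (k - l) * (-1) ^+ (k - l) = 1 :> R by rewrite -expr2 sqrr_sign.
rewrite poch_subn // split_b split_d natrM (natr_bin le_lm) natr_bin; last by lia.
rewrite (_ : (k.-1 - l.-1 = k - l)%N); last by lia.
rewrite [in RHS](_ : (-1) ^+ (n - k) = (-1) ^+ (k - l) * (-1) ^+ (k - l) * (-1) ^+ (n - k));
  last by rewrite sign_sq mul1r.
field; rewrite !natr_fact_neq0 !poch_neq0 // => i.
by rewrite -addrA -natrD.
Qed.

Lemma sum_horn_row m n k : (0 < k)%N -> (k <= n)%N ->
  \sum_(1 <= l < k.+1) fps_shift l k (horn_row k l) m n = row_coef m n k.
Proof.
move=> lt0k le_kn; rewrite /row_coef -Vandermonde_pred // natr_sum mulr_sumr mulr_suml.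
apply: eq_big_nat => l /andP[le1l lt_lk]; rewrite ltnS in lt_lk.
exact: coef_horn_row.
Qed.

Lemma negy_hornH3_row_coef m n : (-1) ^+ n * hornH3 a b d m n = row_coef m n 0.
Proof.
rewrite /row_coef /hornH3 subn0 bin0 poch0.
by field; rewrite !natr_fact_neq0 poch_neq0.
Qed.

Lemma sum_row_coef m n : \sum_(k < n.+1) row_coef m n k = product_coef m n.
Proof.
have -> : \sum_(k < n.+1) row_coef m n k
    = poch a (m%:Z - n%:Z) * poch b m / (poch d m * m`!%:R * poch (1 - a) n * n`!%:R)
      * \sum_(k < n.+1) (-1) ^+ (n - k) * 'C(n, k)%:R * poch m%:R k
                        * poch (1 - a + k%:R) (n - k)%N.
  rewrite mulr_sumr; apply: eq_bigr => k _; have le_kn : (k <= n)%N by rewrite -ltnS.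
  rewrite /row_coef (natr_bin le_kn) poch_natr natrM.
  have -> : poch (1 - a) n = poch (1 - a) k * poch (1 - a + k%:R) (n - k)%N.
    by rewrite -poch_addn subnKC.
  field; rewrite !natr_fact_neq0 !poch_neq0 // => i.
  by rewrite -addrA -natrD.
have split_a : poch a m = poch a (m%:Z - n%:Z) * poch (a + (m%:Z - n%:Z)%:~R) n.
  by rewrite -pochD // subrK.
rewrite chu_vandermonde /product_coef split_a intrB.
have -> : m%:R - (1 - a) - n%:R + 1 = a + (m%:~R - n%:~R) by ring.
ring.
Qed.

Lemma coef_horn_expansion m n :
  fps_add (fps_negy (hornH3 a b d)) (fps_sum_xy horn_row) m n = product_coef m n.
Proof.
rewrite /fps_add /fps_negy /fps_sum_xy negy_hornH3_row_coef.
rewrite (@eq_big_nat _ _ _ 1 n.+1 _ (row_coef m n)) => [|k /andP[lt0k le_kn]].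
  by rewrite -big_ltn // big_mkord sum_row_coef.
exact: sum_horn_row.
Qed.

End Coefficients.

Theorem mainTheorem7 (C : numClosedFieldType) (a b d : C)
  (ha : forall z : int, a != z%:~R)
  (hd : forall n : nat, d != - n%:R) :
  fps_mul (hyp2F1 a b d) (hyp0F1 (1 - a)) =
  fps_add (fps_negy (hornH3 a b d))
    (fps_sum_xy (fun k l =>
       fps_scale (coefKL a b d k l)
         (fps_negy (hornH3 (a - k%:R + l%:R) (b + l%:R) (d + l%:R))))).
Proof.
apply: functional_extensionality => m; apply: functional_extensionality => n.
by rewrite coef_hyp2F1_hyp0F1 coef_horn_expansion.
Qed.
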